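(* Let $G=(N,T,F,P,S)$ be a grounded indexed grammar, $D$ a derivation tree of $G$ (with some set of marked positions of its yield), and $H=(v_0,\dots,v_m)$ a limited flat descent in $D$. Then $H$ has at most $|N|\cdot 3^{|N|}$ splits.
   Context: An indexed grammar $G=(N,T,F,P,S)$ has finite alphabets $N$ (nonterminals), $T$ (terminals), $F$ (stack symbols), start symbol $S$, and productions of the forms $A\to r$, $A\to Bf$, $Af\to r$ ($A,B\in N$, $f\in F$, $r\in(N\cup T)^*$); nonterminals carry stacks $x\in F^*$ (written $Ax$, top first); applying $A\to r$ to $Ax$ gives $r$ with each nonterminal $C$ replaced by $Cx$; $A\to Bf$ turns $Ax$ into $Bfx$; $Af\to r$ turns $Afy$ into $r$ with each nonterminal $C$ replaced by $Cy$. $G$ is grounded if there is $\$\in F$ such that all productions have the forms $S\to A\$$, $A\to r$, $A\to Bf$, $Af\to r$, $A\$\to s$ with $A,B\in N\setminus\{S\}$, $f\in F\setminus\{\$\}$, $r\in(N\setminus\{S\})^+$, $s\in T^*$. A derivation tree is an ordered tree with root labelled $S$ (empty stack), internal nodes labelled in $NF^*$, leaves labelled in $T^*$, where the children of each internal node are obtained from its label by one production (a production $A\$\to s'$ yields a single leaf labelled $s'$); its yield is the concatenation of leaf labels. Marking: a leaf is marked if its label contains a marked position of the yield; an internal node is marked if it has a marked descendant; a branch node is a node with more than one marked child. For an internal node $v$ labelled $Ax$: $\sigma(v)=A$, $\eta(v)=|x|$; $v'$ is in the scope of $v$ iff $v'$ is internal and there is a downward path from $v$ to $v'$ all of whose nodes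 $v''$ (including $v'$) satisfy $\eta(v'')\ge \eta(v)$; $\beta(v)$ is the set of nodes in the scope of $v$ none of whose children is in the scope of $v$; $\tau(v)=(\tau_1,\tau_2,\tau_3)$ with $\tau_1=\{A:\sigma(v')\ne A\ \forall v'\in\beta(v)\}$, $\tau_2=\{A:\exists v'\in\beta(v),\sigma(v')=A$, and no marked $v'\in\beta(v)$ has $\sigma(v')=A\}$, $\tau_3=\{A:\exists$ marked $v'\in\beta(v)$ with $\sigma(v')=A\}$. A descent is a list of internal nodes $(v_0,\dots,v_m)$, $m\ge0$, with $v_m\in\beta(v_0)$ and each $v_i$ ($i\ge1$) a (not necessarily immediate) descendant of $v_{i-1}$. For $0\le i<m$ there is a split between $i$ and $i+1$ iff some node on the tree path from $v_i$ (inclusive) to $v_{i+1}$ (exclusive) is a branch node (counted as one split regardless of how many branch nodes); the number of splits of $H$ is the number of such $i$. $H$ is flat if $\eta(v_i)=\eta(v_0)$ for all $i$. $H$ is limited iff for all $0\le b_1<t_1<t_2\le b_2\le m$ with $\sigma(v_{b_1})=\sigma(v_{t_1})$, $\sigma(v_{t_2})=\sigma(v_{b_2})$, $v_{b_2}\in\beta(v_{b_1})$, $v_{t_2}\in\beta(v_{t_1})$ and $\tau(v_{b_1})=\tau(v_{t_1})$, there is no split between $i$ and $i+1$ for any $b_1\le i<t_1$ or any $t_2\le i<b_2$. *)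

From Stdlib Require List.
From mathcomp Require Import all_boot.
Set Implicit Arguments.
Unset Strict Implicit.
Unset Printing Implicit Defensive.

Section IndexedGrammars.
Variables (N T F : Type).

(* Productions of a (general) indexed grammar:
     Rule A r    :  A -> r      (r in (N u T)^* )
     Push A B f  :  A -> B f
     Pop A f r   :  A f -> r    (r in (N u T)^* )                         *)
Inductive production :=
| Rule of N & seq (N + T)
| Push of N & N & F
| Pop  of N & F & seq (N + T).

Definition is_nt (c : N + T) : bool := if c is inl _ then true else false.
Definition is_t  (c : N + T) : bool := if c is inr _ then true else false.

Definition grounded (S : N) (dol : F) (P : seq production) : Prop :=
  forall p, List.In p P ->
  match p with
  | Push A B f =>
      (A = S /\ f = dol /\ B <> S)
   \/ (A <> S /\ B <> S /\ f <> dol)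
  | Rule A r =>
      A <> S /\ r <> [::] /\
      forall c, List.In c r -> exists C, c = inl C /\ C <> S
  | Pop A f r =>
      A <> S /\
      ((f <> dol /\ r <> [::] /\
         forall c, List.In c r -> exists C, c = inl C /\ C <> S)
       \/ (f = dol /\ forall c, List.In c r -> is_t c))
  end.

(* Derivation trees: internal nodes labelled A x (x in F^*, top first),
   leaves labelled by words in T^*. *)
Inductive tree :=
| Leaf of seq T
| Node of N & seq F & seq tree.

Definition rootlab (t : tree) : (N * seq F) + seq T :=
  match t with Leaf s => inr s | Node A x _ => inl (A, x) end.

(* A right-hand side consisting only of
   terminals (the productions A $ -> s of a grounded grammar) yields a single
   leaf labelled by that terminal word. *)
Definition expand (r : seq (N + T)) (y : seq F) : seq ((N * seq F) + seq T) :=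
  if all is_t r then
    [:: inr (pmap (fun c => if c is inr a then Some a else None) r)]
  else map (fun c => match c with inl C => inl (C, y) | inr a => inr [:: a] end) r.

Definition applies (p : production) (A : N) (x : seq F)
    (ls : seq ((N * seq F) + seq T)) : Prop :=
  match p with
  | Rule A' r => A' = A /\ ls = expand r x
  | Push A' B f => A' = A /\ ls = [:: inl (B, f :: x)]
  | Pop A' f r => A' = A /\ exists y, x = f :: y /\ ls = expand r y
  end.

(* nodes are addressed by sequences of child indices (0-based) *)
Fixpoint sub (t : tree) (v : seq nat) {struct v} : option tree :=
  match v with
  | [::] => Some t
  | i :: q =>
      match t with
      | Leaf _ => None
      | Node _ _ ts => if i < size ts then sub (nth (Leaf [::]) ts i) q else None
      end
  end.

Definition derivation_tree (S : N) (P : seq production) (t : tree) : Prop :=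
  (exists ts, t = Node S [::] ts) /\
  forall v A x ts, sub t v = Some (Node A x ts) ->
    exists p, List.In p P /\ applies p A x (map rootlab ts).

Definition is_node (t : tree) (v : seq nat) : Prop := exists u, sub t v = Some u.
Definition internal (t : tree) (v : seq nat) : Prop :=
  exists A x ts, sub t v = Some (Node A x ts).

(* sigma and eta (meaningful on internal nodes) *)
Definition sigma (t : tree) (v : seq nat) : option N :=
  match sub t v with Some (Node A _ _) => Some A | _ => None end.
Definition eta (t : tree) (v : seq nat) : nat :=
  match sub t v with Some (Node _ x _) => size x | _ => 0 end.

Definition desc_eq (v w : seq nat) : Prop := exists q, w = v ++ q.
Definition desc (v w : seq nat) : Prop := exists q, q <> [::] /\ w = v ++ q.

Definition child (t : tree) (v c : seq nat) : Prop :=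
  is_node t c /\ exists i, c = rcons v i.

Fixpoint ylen (t : tree) : nat :=
  match t with
  | Leaf s => size s
  | Node _ _ ts => sumn (map ylen ts)
  end.

Fixpoint offset (t : tree) (v : seq nat) {struct v} : nat :=
  match v with
  | [::] => 0
  | i :: q =>
      match t with
      | Leaf _ => 0
      | Node _ _ ts => sumn (map ylen (take i ts)) + offset (nth (Leaf [::]) ts i) q
      end
  end.

(* marking; M is the set of marked positions (0-based) of the yield *)
Definition marked_leaf (t : tree) (M : pred nat) (u : seq nat) : Prop :=
  exists s, sub t u = Some (Leaf s) /\
    exists k, k < size s /\ M (offset t u + k).

Definition marked (t : tree) (M : pred nat) (w : seq nat) : Prop :=
  marked_leaf t M w \/ (internal t w /\ exists u, desc w u /\ marked_leaf t M u).

Definition branch (t : tree) (M : pred nat) (w : seq nat) : Prop :=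
  exists c1 c2, c1 <> c2 /\ child t w c1 /\ child t w c2 /\
    marked t M c1 /\ marked t M c2.

Definition in_scope (t : tree) (v v' : seq nat) : Prop :=
  internal t v' /\ desc_eq v v' /\
  forall w, desc_eq v w -> desc_eq w v' -> eta t v <= eta t w.

Definition in_beta (t : tree) (v v' : seq nat) : Prop :=
  in_scope t v v' /\ forall c, child t v' c -> ~ in_scope t v c.

Definition tau1 (t : tree) (v : seq nat) (A : N) : Prop :=
  forall v', in_beta t v v' -> sigma t v' <> Some A.
Definition tau2 (t : tree) (M : pred nat) (v : seq nat) (A : N) : Prop :=
  (exists v', in_beta t v v' /\ sigma t v' = Some A) /\
  ~ (exists v', in_beta t v v' /\ marked t M v' /\ sigma t v' = Some A).
Definition tau3 (t : tree) (M : pred nat) (v : seq nat) (A : N) : Prop :=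
  exists v', in_beta t v v' /\ marked t M v' /\ sigma t v' = Some A.

Definition tau_eq (t : tree) (M : pred nat) (v w : seq nat) : Prop :=
  forall A, (tau1 t v A <-> tau1 t w A) /\ (tau2 t M v A <-> tau2 t M w A) /\
            (tau3 t M v A <-> tau3 t M w A).

(* descents H = (v_0, ..., v_m) given as a nonempty list, v_i = nth [::] H i,
   m = (size H).-1 *)
Definition vtx (H : seq (seq nat)) (i : nat) : seq nat := nth [::] H i.
Definition lastidx (H : seq (seq nat)) : nat := (size H).-1.

Definition descent (t : tree) (H : seq (seq nat)) : Prop :=
  0 < size H /\
  (forall i, i <= lastidx H -> internal t (vtx H i)) /\
  in_beta t (vtx H 0) (vtx H (lastidx H)) /\
  (forall i, 1 <= i <= lastidx H -> desc (vtx H i.-1) (vtx H i)).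

Definition split_at (t : tree) (M : pred nat) (H : seq (seq nat)) (i : nat) : Prop :=
  exists w, desc_eq (vtx H i) w /\ desc w (vtx H i.+1) /\ branch t M w.

Definition at_most_splits (t : tree) (M : pred nat) (H : seq (seq nat)) (K : nat) : Prop :=
  forall s : seq nat, uniq s ->
    (forall i, i \in s -> i < lastidx H /\ split_at t M H i) -> size s <= K.

Definition flat (t : tree) (H : seq (seq nat)) : Prop :=
  forall i, i <= lastidx H -> eta t (vtx H i) = eta t (vtx H 0).

Definition limited (t : tree) (M : pred nat) (H : seq (seq nat)) : Prop :=
  forall b1 t1 t2 b2, b1 < t1 -> t1 < t2 -> t2 <= b2 -> b2 <= lastidx H ->
    sigma t (vtx H b1) = sigma t (vtx H t1) ->
    sigma t (vtx H t2) = sigma t (vtx H b2) ->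
    in_beta t (vtx H b1) (vtx H b2) ->
    in_beta t (vtx H t1) (vtx H t2) ->
    tau_eq t M (vtx H b1) (vtx H t1) ->
    (forall i, b1 <= i < t1 -> ~ split_at t M H i) /\
    (forall i, t2 <= i < b2 -> ~ split_at t M H i).

End IndexedGrammars.

(** Along a flat descent every [v_i] has [v_m] in its [beta], so whenever
    [v_i] and [v_j] ([i < j]) carry the same nonterminal and the same [tau],
    limitedness (applied to [b1 = i], [t1 = j], [t2 = b2 = m]) forbids a split
    at [i].  Hence the split positions are told apart by the pair
    [(sigma(v_i), tau(v_i))], and [tau(v_i)] is determined by recording, for
    each nonterminal, which of the three disjoint sets [tau_1], [tau_2],
    [tau_3] contains it: at most [|N| * 3^|N|] values. *)
From mathcomp Require Import all_boot boolp.

Set Implicit Arguments.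
Unset Strict Implicit.
Unset Printing Implicit Defensive.

Lemma desc_eq_refl (v : seq nat) : desc_eq v v.
Proof. by exists [::]; rewrite cats0. Qed.

Lemma desc_eq_trans (u v w : seq nat) : desc_eq u v -> desc_eq v w -> desc_eq u w.
Proof. by move=> [q1 ->] [q2 ->]; exists (q1 ++ q2); rewrite catA. Qed.

Lemma desc_eq_total (u v w : seq nat) :
  desc_eq u w -> desc_eq v w -> desc_eq u v \/ desc_eq v u.
Proof.
move=> [q ->] [q'].
elim: u v => [|a u IH] [|b v] /=.
- by left; exists [::].
- by left; exists (b :: v).
- by right; exists (a :: u).
- by case=> -> /IH [[r ->]|[r ->]]; [left|right]; exists r.
Qed.

Section Beta.
Variables (N T F : Type) (t : tree N T F).

Lemma in_beta_shift (u v w : seq nat) :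
  in_beta t u w -> desc_eq u v -> desc_eq v w -> eta t v = eta t u ->
  in_beta t v w.
Proof.
move=> [[intw [_ scope_uw]] no_child] uv vw eta_vu.
split.
  split=> //; split=> // x vx xw.
  by rewrite eta_vu; apply: scope_uw => //; apply: desc_eq_trans vx.
move=> c cw [intc [vc scope_vc]]; apply: (no_child c cw).
split=> //; split; first exact: desc_eq_trans vc.
move=> x ux xc; have [xv|vx] := desc_eq_total xc vc.
- by apply: scope_uw => //; apply: desc_eq_trans vw.
- by rewrite -eta_vu; apply: scope_vc.
Qed.

End Beta.

Section TauClass.
Variables (N T F : Type) (t : tree N T F) (M : pred nat).

Definition tau_class (v : seq nat) (A : N) : option bool :=
  if `[< tau3 t M v A >] then Some true
  else if `[< tau2 t M v A >] then Some false
  else None.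

Lemma tau3_class v A : tau3 t M v A <-> tau_class v A = Some true.
Proof.
rewrite /tau_class; case: asboolP => [h3|n3]; first by split.
by case: asboolP; split=> // /n3.
Qed.

Lemma tau2_class v A : tau2 t M v A <-> tau_class v A = Some false.
Proof.
rewrite /tau_class; case: asboolP => [h3|_].
  by split=> // [[_ n3]]; case: n3.
by case: asboolP => [|n2]; split=> // /n2.
Qed.

Lemma tau1_class v A : tau1 t v A <-> tau_class v A = None.
Proof.
rewrite /tau_class; case: asboolP => [[v' [bv' [_ sv']]]|n3].
  by split=> // h1; case: (h1 v' bv' sv').
case: asboolP => [[[v' [bv' sv']] _]|n2].
  by split=> // h1; case: (h1 v' bv' sv').
split=> // _ v' bv' sv'; apply: n2; split; first by exists v'.
by move=> [v'' [bv'' [mv'' sv'']]]; apply: n3; exists v''.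
Qed.

Lemma tau_eq_class v w : tau_class v =1 tau_class w -> tau_eq t M v w.
Proof.
move=> e A; split; last split; split.
- by move/tau1_class=> h; apply/tau1_class; rewrite -e.
- by move/tau1_class=> h; apply/tau1_class; rewrite e.
- by move/tau2_class=> h; apply/tau2_class; rewrite -e.
- by move/tau2_class=> h; apply/tau2_class; rewrite e.
- by move/tau3_class=> h; apply/tau3_class; rewrite -e.
- by move/tau3_class=> h; apply/tau3_class; rewrite e.
Qed.

End TauClass.

Section FlatDescent.
Variables (N T F : Type) (t : tree N T F) (M : pred nat) (H : seq (seq nat)).
Hypotheses (descH : descent t H) (flatH : flat t H).

Lemma descent_desc_eq i j :
  i <= j -> j <= lastidx H -> desc_eq (vtx H i) (vtx H j).
Proof.
case: descH => _ [_ [_ stepH]].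
elim: j => [|j IH] ij jm; first by move: ij; rewrite leqn0 => /eqP ->; apply: desc_eq_refl.
case: (ltngtP i j.+1) ij => // [ij|->] _; last exact: desc_eq_refl.
apply: desc_eq_trans (IH ij (ltnW jm)) _.
by have [q [_ e]] := stepH j.+1 jm; exists q.
Qed.

Lemma flat_descent_in_beta i :
  i <= lastidx H -> in_beta t (vtx H i) (vtx H (lastidx H)).
Proof.
case: descH => _ [_ [beta0 _]] im.
apply: in_beta_shift beta0 _ _ (flatH im); last exact: descent_desc_eq.
exact: descent_desc_eq.
Qed.

Hypothesis limH : limited t M H.

Lemma flat_limited_split_class_neq i j :
  i < j -> j < lastidx H -> split_at t M H i ->
  sigma t (vtx H i) = sigma t (vtx H j) ->
  tau_class t M (vtx H i) =1 tau_class t M (vtx H j) -> False.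
Proof.
move=> ij jm split_i sij tij.
have im : i <= lastidx H by rewrite ltnW // (ltn_trans ij).
have [no_split _] := limH ij jm (leqnn _) (leqnn _) sij erefl
  (flat_descent_in_beta im) (flat_descent_in_beta (ltnW jm)) (tau_eq_class tij).
by apply: (no_split i) => //; rewrite leqnn ij.
Qed.

End FlatDescent.

Lemma internal_sigma (N T F : Type) (t : tree N T F) v (A0 : N) :
  internal t v -> sigma t v = Some (odflt A0 (sigma t v)).
Proof. by move=> [A [x [ts e]]]; rewrite /sigma e. Qed.

Theorem lemma3 (N T F : finType) (S : N) (dol : F) (P : seq (production N T F))
    (hG : grounded S dol P)
    (D : tree N T F) (hD : derivation_tree S P D)
    (M : pred nat) (H : seq (seq nat))
    (hH : descent D H) (hflat : flat D H) (hlim : limited D M H) :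
  at_most_splits D M H (#|N| * 3 ^ #|N|).
Proof.
move=> s uniq_s splits_s.
pose signature i : N * {ffun N -> option bool} :=
  (odflt S (sigma D (vtx H i)), [ffun A => tau_class D M (vtx H i) A]).
have sigma_vtx i : i <= lastidx H -> sigma D (vtx H i) = Some (signature i).1.
  by case: hH => _ [int_vtx _] /int_vtx; apply: internal_sigma.
have distinct i j : i \in s -> j \in s -> i < j -> signature i <> signature j.
  move=> /splits_s [im split_i] /splits_s [jm _] ij [si ti].
  apply: (flat_limited_split_class_neq hH hflat hlim ij jm split_i).
    by rewrite (sigma_vtx i (ltnW im)) (sigma_vtx j (ltnW jm)); congr Some.
  by move/ffunP: ti => ti A; have := ti A; rewrite !ffunE.
have inj_signature : {in s &, injective signature}.
  move=> i j si sj e; case: (ltngtP i j) => // ij.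
  - by case: (distinct i j si sj ij e).
  - by case: (distinct j i sj si ij (esym e)).
have /card_uniqP : uniq (map signature s) by rewrite map_inj_in_uniq.
rewrite size_map => <-; apply: leq_trans (max_card _) _.
by rewrite card_prod card_ffun card_option card_bool.
Qed.
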